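(* Let $C\subseteq\Lambda$ be any region. Let $W$ be any Hamiltonian that is relatively bounded by $H_0(C)$ with a constant $0\le b<1$, i.e. $\|W\psi\|\le b\|H_0(C)\psi\|$ for all $\psi\in\mathcal{H}$. Then for any operator $S$ on $\mathcal{H}$, \[ \|Q_C[S,W]P_C\|\le b\,\|Q_C[S,H_0(C)]P_C\|. \]
   Context: Let $\Lambda=\mathbb{Z}_L\times\mathbb{Z}_L$, each site carrying a finite-dimensional Hilbert space, $\mathcal{H}$ their tensor product, and $\mathcal{S}(2)$ the set of $2\times2$ squares of sites. $H_0=\sum_{A\in\mathcal{S}(2)}G_A$ with each $G_A$ acting on $A$, the $G_A$ pairwise commuting, $G_A\ge0$ and $G_A^2\ge G_A$. $P_A$ is the projector onto $\ker G_A$; for a region $C$, $P_C=\prod_{A\in\mathcal{S}(2),A\subseteq C}P_A$, $Q_C=I-P_C$, and $H_0(C)=\sum_{A\in\mathcal{S}(2),A\subseteq C}G_A$. *)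

From HB Require Import structures.
From mathcomp Require Import all_boot all_order all_algebra.
From mathcomp Require Import classical_sets reals.
From mathcomp Require Import complex.
Set Implicit Arguments. Unset Strict Implicit. Unset Printing Implicit Defensive.
Import Order.TTheory GRing.Theory Num.Theory.
Local Open Scope ring_scope.

(* Sites of the torus Lambda = Z_L x Z_L. *)
Definition site (L : nat) := ('I_L * 'I_L)%type.

(* Basis configurations of H = (x)_{s in Lambda} C^{d s}:
   a basis state assigns to every site s a basis index in 'I_(d s). *)
Definition cfg (L : nat) (d : site L -> nat) := {dffun forall s : site L, 'I_(d s)}.

Section Ops.
Variables (R : realType) (L : nat) (d : site L -> nat).
Local Notation C := R[i].
Local Notation T := (cfg d).

Definition vec := T -> C.
Definition op := T -> T -> C.

Definition apply (A : op) (v : vec) : vec := fun x => \sum_y A x y * v y.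
Definition opmul (A B : op) : op := fun x z => \sum_y A x y * B y z.
Definition opadd (A B : op) : op := fun x y => A x y + B x y.
Definition opsub (A B : op) : op := fun x y => A x y - B x y.
Definition opid : op := fun x y => (x == y)%:R.
Definition opzero : op := fun _ _ => 0.
Definition opscale (c : C) (A : op) : op := fun x y => c * A x y.
Definition adjoint (A : op) : op := fun x y => (A y x)^*.
Definition comm (A B : op) : op := opsub (opmul A B) (opmul B A).

Definition dot (u v : vec) : C := \sum_x (u x)^* * v x.
Definition vnorm (v : vec) : R := Num.sqrt (complex.Re (dot v v)).

Definition opnorm (A : op) : R :=
  sup [set vnorm (apply A v) | v in [set v : vec | vnorm v <= 1]].

Definition herm_op (A : op) : Prop := forall x y, A x y = (A y x)^*.
Definition psd (A : op) : Prop := forall v, 0 <= dot v (apply A v).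
Definition ople (A B : op) : Prop := psd (opsub B A).

Definition is_kernel_projector (G P : op) : Prop :=
  herm_op P /\ opmul P P = P /\
  (forall v, apply G (apply P v) = (fun _ => 0)) /\
  (forall v, apply G v = (fun _ => 0) -> apply P v = v).

(* A acts on the region X: A = a (x) I_{Lambda \ X} *)
Definition agree_on (X : {set site L}) (x y : T) := forall s, s \in X -> x s = y s.
Definition acts_on (X : {set site L}) (A : op) : Prop :=
  (forall x y, ~ agree_on (~: X) x y -> A x y = 0) /\
  (forall x y x' y', agree_on (~: X) x y -> agree_on (~: X) x' y' ->
     agree_on X x x' -> agree_on X y y' -> A x y = A x' y').

Definition opsum (I : Type) (r : seq I) (F : I -> op) : op :=
  foldr (fun i acc => opadd (F i) acc) opzero r.
Definition opprod (I : Type) (r : seq I) (F : I -> op) : op :=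
  foldr (fun i acc => opmul (F i) acc) opid r.
End Ops.

Definition square (L : nat) (c : site L) : {set site L} :=
  [set c; (ordS c.1, c.2); (c.1, ordS c.2); (ordS c.1, ordS c.2)].
Definition squares (L : nat) : {set {set site L}} :=
  [set square c | c in [set: site L]].

Definition squares_in (L : nat) (X : {set site L}) : seq {set site L} :=
  enum [set A in squares L | A \subset X].

Definition H0_on (R : realType) (L : nat) (d : site L -> nat)
  (G : {set site L} -> op R d) (X : {set site L}) : op R d :=
  opsum (squares_in X) G.
Definition P_on (R : realType) (L : nat) (d : site L -> nat)
  (P : {set site L} -> op R d) (X : {set site L}) : op R d :=
  opprod (squares_in X) P.
Definition Q_on (R : realType) (L : nat) (d : site L -> nat)
  (P : {set site L} -> op R d) (X : {set site L}) : op R d :=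
  opsub (@opid R L d) (P_on P X).

From HB Require Import structures.
From mathcomp Require Import all_boot all_order all_algebra.
From mathcomp Require Import boolp classical_sets reals.
From mathcomp Require Import complex ring.
Set Implicit Arguments. Unset Strict Implicit. Unset Printing Implicit Defensive.
Import Order.TTheory GRing.Theory Num.Theory.
Local Open Scope ring_scope.

(* The local ground-state projectors P_A commute with each other and with all
   the G_B, so P_C is an orthogonal projector with H_0(C) P_C = P_C H_0(C) = 0.
   Relative boundedness gives W P_C = 0, and W = W^* then gives P_C W = 0.
   For any X with X P_C = P_C X = 0 we get Q_C [S, X] P_C = - X S P_C, so
   ||Q_C [S, W] P_C psi|| = ||W S P_C psi|| <= b ||H_0(C) S P_C psi||
   = b ||Q_C [S, H_0(C)] P_C psi||. *)

Section Operators.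
Variables (R : realType) (L : nat) (d : site L -> nat).
Local Notation C := R[i].
Local Notation T := (cfg d).
Local Notation op := (op R d).
Local Notation vec := (vec R d).
Local Notation opzero := (@opzero R L d).
Local Notation opid := (@opid R L d).
Implicit Types A B D X : op.
Implicit Types u v : vec.

Lemma opE A B : (forall x y, A x y = B x y) -> A = B.
Proof. by move=> eqAB; apply/funext=> x; apply/funext=> y; apply: eqAB. Qed.

Lemma sum_delta_l (x : T) (F : T -> C) : \sum_y (x == y)%:R * F y = F x.
Proof.
rewrite (bigD1 x) //= eqxx mul1r big1 ?addr0 // => y neq_yx.
by rewrite eq_sym (negbTE neq_yx) mul0r.
Qed.

Lemma sum_delta_r (x : T) (F : T -> C) : \sum_y F y * (y == x)%:R = F x.
Proof.
rewrite (bigD1 x) //= eqxx mulr1 big1 ?addr0 // => y neq_yx.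
by rewrite (negbTE neq_yx) mulr0.
Qed.

Lemma opmulA A B D : opmul (opmul A B) D = opmul A (opmul B D).
Proof.
apply: opE => x w; rewrite /opmul.
under eq_bigr do rewrite mulr_suml.
rewrite exchange_big /=; apply: eq_bigr => y _.
by rewrite mulr_sumr; apply: eq_bigr => z _; rewrite mulrA.
Qed.

Lemma applyM A B v : apply (opmul A B) v = apply A (apply B v).
Proof.
apply/funext => x; rewrite /apply /opmul.
under eq_bigr do rewrite mulr_suml.
rewrite exchange_big /=; apply: eq_bigr => y _.
by rewrite mulr_sumr; apply: eq_bigr => z _; rewrite mulrA.
Qed.

Lemma opmulBr A B D : opmul A (opsub B D) = opsub (opmul A B) (opmul A D).
Proof.
apply: opE => x z; rewrite /opmul /opsub -sumrB.
by apply: eq_bigr => y _; rewrite mulrBr.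
Qed.

Lemma opmulBl A B D : opmul (opsub A B) D = opsub (opmul A D) (opmul B D).
Proof.
apply: opE => x z; rewrite /opmul /opsub -sumrB.
by apply: eq_bigr => y _; rewrite mulrBl.
Qed.

Lemma opmulDl A B D : opmul (opadd A B) D = opadd (opmul A D) (opmul B D).
Proof.
apply: opE => x z; rewrite /opmul /opadd -big_split.
by apply: eq_bigr => y _; rewrite mulrDl.
Qed.

Lemma opmulDr A B D : opmul A (opadd B D) = opadd (opmul A B) (opmul A D).
Proof.
apply: opE => x z; rewrite /opmul /opadd -big_split.
by apply: eq_bigr => y _; rewrite mulrDr.
Qed.

Lemma opmul0r A : opmul A opzero = opzero.
Proof. by apply: opE => x z; rewrite /opmul big1 // => y _; rewrite mulr0. Qed.

Lemma opmul0l A : opmul opzero A = opzero.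
Proof. by apply: opE => x z; rewrite /opmul big1 // => y _; rewrite mul0r. Qed.

Lemma opmul1l A : opmul opid A = A.
Proof. by apply: opE => x z; rewrite /opmul /opid sum_delta_l. Qed.

Lemma opmul1r A : opmul A opid = A.
Proof. by apply: opE => x z; rewrite /opmul /opid sum_delta_r. Qed.

Lemma opsubr0 A : opsub A opzero = A.
Proof. by apply: opE => x z; rewrite /opsub subr0. Qed.

Lemma opadd0r A : opadd A opzero = A.
Proof. by apply: opE => x z; rewrite /opadd addr0. Qed.

Lemma adjointM A B : adjoint (opmul A B) = opmul (adjoint B) (adjoint A).
Proof.
apply: opE => x z; rewrite /adjoint /opmul rmorph_sum.
by apply: eq_bigr => y _; rewrite rmorphM mulrC.
Qed.

Lemma adjoint0 : adjoint opzero = opzero.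
Proof. by apply: opE => x z; rewrite /adjoint conjC0. Qed.

Lemma adjoint1 : adjoint opid = opid.
Proof. by apply: opE => x z; rewrite /adjoint /opid conjC_nat eq_sym. Qed.

Lemma herm_adjoint A : herm_op A -> adjoint A = A.
Proof. by move=> hermA; apply: opE => x y; rewrite /adjoint -hermA. Qed.

Lemma opmul_eq0_adjoint A B :
  opmul A B = opzero -> opmul (adjoint B) (adjoint A) = opzero.
Proof. by move=> AB0; rewrite -adjointM AB0 adjoint0. Qed.

Lemma apply0 v : apply opzero v = (fun _ => 0).
Proof. by apply/funext => x; rewrite /apply big1 // => y _; rewrite mul0r. Qed.

Lemma op_apply_inj A B : (forall v, apply A v = apply B v) -> A = B.
Proof.
move=> eqAB; apply: opE => x y.
have basis (K : op) : apply K (fun z => (z == y)%:R) x = K x y.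
  by rewrite /apply sum_delta_r.
by rewrite -!basis eqAB.
Qed.

Lemma dotE K u v : dot u (apply K v) = \sum_x \sum_y (u x)^* * K x y * v y.
Proof.
rewrite /dot /apply; apply: eq_bigr => x _; rewrite mulr_sumr.
by apply: eq_bigr => y _; rewrite mulrA.
Qed.

Lemma dot_apply_pair K (x y : T) (c : C) :
  let v := fun z => (z == x)%:R + c * (z == y)%:R in
  dot v (apply K v) = K x x + c * K x y + c^* * (K y x + c * K y y).
Proof.
have lin_r (e : C) (F : T -> C) :
    \sum_z F z * ((z == x)%:R + e * (z == y)%:R) = F x + e * F y.
  under eq_bigr do rewrite mulrDr mulrCA.
  by rewrite big_split /= sum_delta_r -mulr_sumr sum_delta_r.
move=> v; rewrite /v /dot /apply.
transitivity (\sum_z ((z == x)%:R + c * (z == y)%:R)^* * (K z x + c * K z y)).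
  by apply: eq_bigr => z _; rewrite lin_r mulrDr mulrCA.
under eq_bigr do rewrite rmorphD rmorphM /= !conjC_nat.
under eq_bigr do rewrite mulrC.
exact: lin_r.
Qed.

(* Complex polarization: testing on e_x + e_y and e_x + i e_y. *)
Lemma dot_apply_eq0 K : (forall v, dot v (apply K v) = 0) -> K = opzero.
Proof.
move=> K0; have Kdiag x : K x x = 0.
  by have := K0 (fun z => (z == x)%:R + 0 * (z == x)%:R);
    rewrite dot_apply_pair conjC0 !mul0r !addr0.
apply: opE => x y.
have := K0 (fun z => (z == x)%:R + 1 * (z == y)%:R).
rewrite dot_apply_pair conjC1 !Kdiag !mul1r add0r addr0 => /eqP.
rewrite addrC addr_eq0 => /eqP Kyx.
have := K0 (fun z => (z == x)%:R + 'i * (z == y)%:R).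
rewrite dot_apply_pair conjCi !Kdiag mulr0 add0r addr0 Kyx.
have -> : 'i * K x y + - 'i * (- K x y) = 'i * (2%:R * K x y) by ring.
move/eqP; rewrite mulf_eq0 (negbTE (neq0Ci _)) mulf_eq0 pnatr_eq0 /=.
by move/eqP.
Qed.

Lemma psd_herm A : psd A -> herm_op A.
Proof.
move=> psdA; suff AA0 : opsub A (adjoint A) = opzero.
  move=> x y; have /eqP := congr1 (fun K => K x y) AA0.
  by rewrite /opsub /adjoint subr_eq0 => /eqP.
apply: dot_apply_eq0 => v.
have -> : dot v (apply (opsub A (adjoint A)) v)
          = dot v (apply A v) - dot v (apply (adjoint A) v).
  rewrite !dotE -sumrB; apply: eq_bigr => x _; rewrite -sumrB.
  by apply: eq_bigr => y _; rewrite /opsub; ring.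
have -> : dot v (apply (adjoint A) v) = (dot v (apply A v))^*.
  rewrite !dotE rmorph_sum exchange_big /=; apply: eq_bigr => y _.
  rewrite rmorph_sum; apply: eq_bigr => x _.
  by rewrite /adjoint !rmorphM /= conjCK; ring.
by rewrite conj_Creal ?ger0_real // subrr.
Qed.

Lemma kernel_projector_mul_eq0 G P : is_kernel_projector G P -> opmul G P = opzero.
Proof.
case=> _ [_ [GP0 _]]; apply: op_apply_inj => v.
by rewrite applyM GP0 apply0.
Qed.

(* P X P = X P because X preserves ker G; taking adjoints gives P X P = P X. *)
Lemma kernel_projector_commute G P X : adjoint X = X ->
  opmul X G = opmul G X -> is_kernel_projector G P -> opmul X P = opmul P X.
Proof.
move=> hermX XG kerP; have GP0 := kernel_projector_mul_eq0 kerP.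
case: kerP => /herm_adjoint hermP [_ [_ Pker]].
have PXP : opmul P (opmul X P) = opmul X P.
  apply: op_apply_inj => v; rewrite applyM; apply: Pker.
  by rewrite -applyM -opmulA -XG opmulA GP0 opmul0r apply0.
have := congr1 (@adjoint R L d) PXP; rewrite !adjointM hermX hermP opmulA => PXPE.
by rewrite -PXP PXPE.
Qed.

Lemma opprod_commute (I : eqType) (r : seq I) (F : I -> op) X :
  (forall a, a \in r -> opmul X (F a) = opmul (F a) X) ->
  opmul X (opprod r F) = opmul (opprod r F) X.
Proof.
elim: r => [|a r IH] XF /=; first by rewrite opmul1l opmul1r.
rewrite -opmulA XF ?mem_head // !opmulA IH // => b rb.
by apply: XF; rewrite in_cons rb orbT.
Qed.

Lemma opprod_adjoint (I : eqType) (r : seq I) (F : I -> op) :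
  (forall a, a \in r -> adjoint (F a) = F a) ->
  (forall a b, a \in r -> b \in r -> opmul (F a) (F b) = opmul (F b) (F a)) ->
  adjoint (opprod r F) = opprod r F.
Proof.
elim: r => [|a r IH] hermF commF /=; first exact: adjoint1.
have sub_r b : b \in r -> b \in a :: r by rewrite in_cons => ->; rewrite orbT.
rewrite adjointM hermF ?mem_head // IH => [|b rb|b b' rb rb'].
- by symmetry; apply: opprod_commute => b rb; apply: commF; rewrite ?mem_head ?sub_r.
- by apply: hermF; apply: sub_r.
- by apply: commF; apply: sub_r.
Qed.

Lemma opprod_mul_eq0 (I : eqType) (r : seq I) (F : I -> op) X (a : I) :
  a \in r -> opmul X (F a) = opzero ->
  (forall b, b \in r -> opmul X (F b) = opmul (F b) X) ->
  opmul X (opprod r F) = opzero.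
Proof.
elim: r => [|b r IH] //=; rewrite in_cons => ra XFa commX.
have [<-|neq_ab] := eqVneq a b; first by rewrite -opmulA XFa opmul0l.
rewrite -opmulA commX ?mem_head // opmulA IH ?opmul0r // => [|c rc].
  by move: ra; rewrite (negbTE neq_ab).
by apply: commX; rewrite in_cons rc orbT.
Qed.

Lemma opsum_mull_eq0 (I : eqType) (r : seq I) (F : I -> op) X :
  (forall a, a \in r -> opmul (F a) X = opzero) -> opmul (opsum r F) X = opzero.
Proof.
elim: r => [|a r IH] FX0 /=; first exact: opmul0l.
rewrite opmulDl FX0 ?mem_head // IH ?opadd0r // => b rb.
by apply: FX0; rewrite in_cons rb orbT.
Qed.

Lemma opsum_mulr_eq0 (I : eqType) (r : seq I) (F : I -> op) X :
  (forall a, a \in r -> opmul X (F a) = opzero) -> opmul X (opsum r F) = opzero.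
Proof.
elim: r => [|a r IH] XF0 /=; first exact: opmul0r.
rewrite opmulDr XF0 ?mem_head // IH ?opadd0r // => b rb.
by apply: XF0; rewrite in_cons rb orbT.
Qed.

Section CommutingKernelProjectors.
Variables (I : eqType) (r : seq I) (G P : I -> op).
Hypothesis G_herm : forall a, a \in r -> adjoint (G a) = G a.
Hypothesis G_commute :
  forall a b, a \in r -> b \in r -> opmul (G a) (G b) = opmul (G b) (G a).
Hypothesis P_kernel : forall a, a \in r -> is_kernel_projector (G a) (P a).

Lemma G_P_commute a b : a \in r -> b \in r ->
  opmul (G a) (P b) = opmul (P b) (G a).
Proof.
move=> ra rb.
exact: kernel_projector_commute (G_herm ra) (G_commute ra rb) (P_kernel rb).
Qed.

Lemma P_P_commute a b : a \in r -> b \in r ->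
  opmul (P a) (P b) = opmul (P b) (P a).
Proof.
move=> ra rb; have [/herm_adjoint hermPa _] := P_kernel ra.
by apply: kernel_projector_commute hermPa _ (P_kernel rb); rewrite G_P_commute.
Qed.

Lemma opprod_P_adjoint : adjoint (opprod r P) = opprod r P.
Proof.
apply: opprod_adjoint => [a ra|]; last exact: P_P_commute.
by have [/herm_adjoint] := P_kernel ra.
Qed.

Lemma G_opprod_P_eq0 a : a \in r -> opmul (G a) (opprod r P) = opzero.
Proof.
move=> ra; apply: (opprod_mul_eq0 ra).
  exact: kernel_projector_mul_eq0 (P_kernel ra).
by move=> b rb; apply: G_P_commute.
Qed.

Lemma opsum_G_opprod_P_eq0 : opmul (opsum r G) (opprod r P) = opzero.
Proof. exact: opsum_mull_eq0 G_opprod_P_eq0. Qed.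

Lemma opprod_P_opsum_G_eq0 : opmul (opprod r P) (opsum r G) = opzero.
Proof.
apply: opsum_mulr_eq0 => a ra; rewrite -opprod_commute ?G_opprod_P_eq0 //.
by move=> b rb; apply: G_P_commute.
Qed.

End CommutingKernelProjectors.

Lemma compl_comm_proj X S P : opmul X P = opzero -> opmul P X = opzero ->
  opmul (opsub opid P) (opmul (comm S X) P) = opmul X (opmul (opsub opzero S) P).
Proof.
move=> XP0 PX0.
have commP : opmul (comm S X) P = opmul X (opmul (opsub opzero S) P).
  by rewrite /comm opmulBl !opmulA XP0 opmul0r opmulBl opmul0l opmulBr opmul0r.
rewrite commP opmulBl opmul1l -[opmul P (opmul X _)]opmulA PX0 opmul0l.
exact: opsubr0.
Qed.

Definition nsq u : C := \sum_x `|u x| ^+ 2.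

Lemma nsq_ge0 u : 0 <= nsq u.
Proof. by apply: sumr_ge0 => x _; rewrite exprn_ge0. Qed.

Lemma vnormE u : vnorm u = Num.sqrt (complex.Re (nsq u)).
Proof.
rewrite /vnorm /dot /nsq; congr (Num.sqrt (complex.Re _)).
by apply: eq_bigr => x _; rewrite normCKC.
Qed.

Lemma nsq_real u : nsq u = ((complex.Re (nsq u))%:C)%C.
Proof.
move: (nsq_ge0 u); rewrite lecE => /andP[/eqP im0 _].
by case: (nsq u) im0 => ? ? /= ->.
Qed.

Lemma vnorm0 : vnorm (fun _ : T => 0 : C) = 0.
Proof. by rewrite vnormE /nsq big1 ?sqrtr0 // => x _; rewrite normr0 expr0n. Qed.

Lemma vnorm_le0 u : vnorm u <= 0 -> u = (fun _ => 0).
Proof.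
rewrite vnormE => sqrt_le0.
have /eqP : Num.sqrt (complex.Re (nsq u)) = 0.
  by apply/eqP; rewrite eq_le sqrt_le0 sqrtr_ge0.
rewrite sqrtr_eq0 => Re_le0.
have nsq0 : nsq u = 0.
  by apply/eqP; rewrite eq_le nsq_ge0 andbT nsq_real lecE /= eqxx.
apply/funext => x; apply/eqP; rewrite -normr_eq0 -(sqrf_eq0 `|u x|); apply/eqP.
apply: (@psumr_eq0P _ _ predT (fun y => `|u y| ^+ 2)) => // y _.
by rewrite exprn_ge0.
Qed.

Lemma vnorm_le1_entry u (y : T) : vnorm u <= 1 -> `|u y| <= 1.
Proof.
rewrite vnormE => le1.
have Re_le1 : complex.Re (nsq u) <= 1.
  have Re_ge0 : 0 <= complex.Re (nsq u) by move: (nsq_ge0 u); rewrite lecE => /andP[].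
  by rewrite -(sqr_sqrtr Re_ge0) exprn_ile1 ?sqrtr_ge0.
have nsq_le1 : nsq u <= 1 by rewrite nsq_real lecE /= eqxx Re_le1.
have entry_le : `|u y| ^+ 2 <= nsq u.
  rewrite /nsq (bigD1 y) //= lerDl.
  by apply: sumr_ge0 => x _; rewrite exprn_ge0.
by rewrite -(@expr_le1 _ 2) // (le_trans entry_le nsq_le1).
Qed.

Lemma apply_bounded A : exists M, forall v, vnorm v <= 1 -> vnorm (apply A v) <= M.
Proof.
exists (Num.sqrt (complex.Re (\sum_x (\sum_y `|A x y|) ^+ 2))) => v v_le1.
rewrite vnormE; apply: ler_wsqrtr.
have : nsq (apply A v) <= \sum_x (\sum_y `|A x y|) ^+ 2.
  apply: ler_sum => x _.
  have row_le : `|apply A v x| <= \sum_y `|A x y|.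
    apply: le_trans (ler_norm_sum _ _ _) _; apply: ler_sum => y _.
    by rewrite normrM -{2}(mulr1 `|A x y|) ler_wpM2l ?vnorm_le1_entry.
  by rewrite !expr2 ler_pM.
by rewrite lecE => /andP[].
Qed.

Lemma opnorm_le A B (b : R) : 0 <= b ->
  (forall v, vnorm (apply A v) <= b * vnorm (apply B v)) ->
  opnorm A <= b * opnorm B.
Proof.
move=> b_ge0 AB; have [M BM] := apply_bounded B.
have zero_le1 : vnorm (fun _ : T => 0 : C) <= 1 by rewrite vnorm0.
have supB : has_sup [set vnorm (apply B v) | v in [set v : vec | vnorm v <= 1]].
  split; first by exists (vnorm (apply B (fun _ => 0))), (fun _ => 0).
  by exists M => _ [v v_le1 <-]; apply: BM.
apply: ge_sup; first by exists (vnorm (apply A (fun _ => 0))), (fun _ => 0).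
move=> _ [v v_le1 <-]; apply: le_trans (AB v) _.
by apply: ler_wpM2l => //; apply: (sup_upper_bound supB); exists v.
Qed.

Lemma relbound_mul_eq0 W H P (b : R) :
  (forall v, vnorm (apply W v) <= b * vnorm (apply H v)) ->
  opmul H P = opzero -> opmul W P = opzero.
Proof.
move=> WH HP0; apply: op_apply_inj => v; rewrite applyM apply0.
by apply: vnorm_le0; apply: le_trans (WH _) _; rewrite -applyM HP0 apply0 vnorm0 mulr0.
Qed.

End Operators.

(* Only the hermiticity of the G_A (from G_A >= 0), their mutual commutation
   and the kernel projectors are used. *)
Theorem lemma4 (R : realType) (L : nat) (d : site L -> nat)
  (G P : {set site L} -> op R d)
  (HGact : forall A, A \in squares L -> acts_on A (G A))
  (HGcomm : forall A B, A \in squares L -> B \in squares L ->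
     opmul (G A) (G B) = opmul (G B) (G A))
  (HGpos : forall A, A \in squares L -> psd (G A))
  (HGsq : forall A, A \in squares L -> ople (G A) (opmul (G A) (G A)))
  (HP : forall A, A \in squares L -> is_kernel_projector (G A) (P A))
  (C : {set site L}) (W : op R d) (b : R)
  (HWherm : herm_op W)
  (Hb0 : 0 <= b) (Hb1 : b < 1)
  (HWbound : forall psi : vec R d,
     vnorm (apply W psi) <= b * vnorm (apply (H0_on G C) psi))
  (S : op R d) :
  opnorm (opmul (Q_on P C) (opmul (comm S W) (P_on P C)))
  <= b * opnorm (opmul (Q_on P C) (opmul (comm S (H0_on G C)) (P_on P C))).
Proof.
have inC A : A \in squares_in C -> A \in squares L.
  by rewrite /squares_in mem_enum inE => /andP[].
have G_herm A : A \in squares_in C -> adjoint (G A) = G A.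
  by move=> /inC /HGpos /psd_herm /herm_adjoint.
have G_comm A B (CA : A \in squares_in C) (CB : B \in squares_in C) :=
  HGcomm A B (inC A CA) (inC B CB).
have P_ker A (CA : A \in squares_in C) := HP A (inC A CA).
have H0P0 := opsum_G_opprod_P_eq0 G_herm G_comm P_ker.
have PH00 := opprod_P_opsum_G_eq0 G_herm G_comm P_ker.
have WP0 : opmul W (P_on P C) = @opzero R L d := relbound_mul_eq0 HWbound H0P0.
have PC_herm : adjoint (P_on P C) = P_on P C :=
  opprod_P_adjoint G_herm G_comm P_ker.
have PW0 : opmul (P_on P C) W = @opzero R L d.
  by rewrite -PC_herm -(herm_adjoint HWherm) opmul_eq0_adjoint.
rewrite /Q_on !compl_comm_proj //.
by apply: opnorm_le Hb0 _ => v; rewrite !applyM.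
Qed.
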